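(* Let $n>1$ be an odd integer, $k\ge1$, and $p$ the smallest prime divisor of $n$. Then for every $\mathbf{m}\in\mathbb{Z}_n^k\setminus\{\mathbf{0}\}$ and every $\mathbf{c}\|t\in\mathbb{Z}_n^k\times\mathbb{Z}_n$, $$\Pr_{\mathbf{m}',\mathbf{x}\leftarrow\mathbb{Z}_n^k,\ \mathbf{y}\leftarrow(\mathbb{Z}_n^* )^k}\big[\mathbf{m}'=\mathbf{m}\ \big|\ \mathcal{E}_{\mathbf{x}\|\mathbf{y}}(\mathbf{m}')=\mathbf{c}\|t\big]\le\frac{1}{(p-1)n^{k-1}},$$ i.e., $\mathrm{C}^{n,k}_{\mathrm{RDH}}$ provides $\frac{1}{(p-1)n^{k-1}}$-secrecy on $\mathbb{Z}_n^k\setminus\{\mathbf{0}\}$.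
   Context: For $\mathbf{y}\in(\mathbb{Z}_n^* )^k$ and $\mathbf{m}\in\mathbb{Z}_n^k$ let $\Upsilon_{\mathbf{y}}(\mathbf{m})=\sum_{i=1}^k m_iy_i\bmod n$. The code $\mathrm{C}^{n,k}_{\mathrm{RDH}}$ has keys $\mathbf{x}\|\mathbf{y}\in\mathbb{Z}_n^k\times(\mathbb{Z}_n^* )^k$ and encryption $\mathcal{E}_{\mathbf{x}\|\mathbf{y}}(\mathbf{m})=(\mathbf{m}+\mathbf{x}\bmod n)\,\|\,\Upsilon_{\mathbf{y}}(\mathbf{m})$ for $\mathbf{m}\in\mathbb{Z}_n^k$. All random choices are uniform and independent; the conditioning event is assumed to have positive probability. *)

From HB Require Import structures.
From mathcomp Require Import all_boot all_order all_algebra.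
Set Implicit Arguments. Unset Strict Implicit. Unset Printing Implicit Defensive.
Import Order.TTheory GRing.Theory Num.Theory.
Local Open Scope ring_scope.

(* Vectors in Z_n^k (use only with 1 < n). *)
Definition vec (n k : nat) := {ffun 'I_k -> 'Z_n}.

Definition Ups (n k : nat) (y m : vec n k) : 'Z_n := \sum_(i < k) m i * y i.

Definition Enc (n k : nat) (x y m : vec n k) : vec n k * 'Z_n :=
  ([ffun i => m i + x i], Ups y m).

Definition unit_vec (n k : nat) (y : vec n k) : bool :=
  [forall i, (y i \in GRing.unit)].

(* Sample space of triples ((m', x), y): m', x range over Z_n^k, y over unit vectors; uniform *)
Definition sample_space (n k : nat) : {set vec n k * vec n k * vec n k} :=
  [set w | unit_vec w.2].

Definition enc_event (n k : nat) (c : vec n k) (t : 'Z_n)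
  : {set vec n k * vec n k * vec n k} :=
  [set w in sample_space n k | Enc w.1.2 w.2 w.1.1 == (c, t)].

Definition joint_event (n k : nat) (m c : vec n k) (t : 'Z_n)
  : {set vec n k * vec n k * vec n k} :=
  [set w in enc_event c t | w.1.1 == m].

Definition cond_prob (n k : nat) (m c : vec n k) (t : 'Z_n) : rat :=
  (#|joint_event m c t|%:R) / (#|enc_event c t|%:R).

From HB Require Import structures.
From mathcomp Require Import all_boot all_order all_algebra.
Import Order.TTheory GRing.Theory Num.Theory.
Set Implicit Arguments. Unset Strict Implicit. Unset Printing Implicit Defensive.
Local Open Scope ring_scope.

(* Given the ciphertext [c || t], a plaintext [m'] forces [x = c - m'], so the
   conditioning event corresponds to the pairs [(y, m')] with [y] a unit vector
   and [Ups y m' = t]; for each [y] these [m'] form a fibre of a surjective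
   linear form, of size [n ^ (k - 1)].  The event [m' = m] corresponds to the
   unit vectors [y] with [Ups y m = t].  Multiplying the coordinate [y j], where
   [m j != 0], by [1, ..., p - 1] maps such a [y] to [p - 1] distinct unit
   vectors, and the images of distinct [y] are disjoint because differences of
   these scalars are units modulo [n]. *)

Lemma coprime_lt_pdiv n d : (0 < d)%N -> (d < pdiv n)%N -> coprime n d.
Proof.
move=> d_gt0 lt_d_p; rewrite /coprime eqn_leq gcdn_gt0 d_gt0 orbT andbT.
rewrite leqNgt; apply/negP => /pdiv_min_dvd/(_ (dvdn_gcdl n d)) le_p_g.
have := leq_trans le_p_g (dvdn_leq d_gt0 (dvdn_gcdr n d)).
by rewrite leqNgt lt_d_p.
Qed.

Lemma Zp_natr_sub_unit n a b : (1 < n)%N -> (a < pdiv n)%N -> (b < pdiv n)%N ->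
  a != b -> (a%:R - b%:R : 'Z_n) \is a GRing.unit.
Proof.
move=> n_gt1; wlog lt_ba : a b / (b < a)%N => [hwlog a_lt b_lt neq_ab|a_lt _ _].
  case: (ltngtP a b) => [lt_ab|lt_ba|eq_ab]; last by rewrite eq_ab eqxx in neq_ab.
  - by rewrite -opprB unitrN hwlog // eq_sym.
  - exact: hwlog.
rewrite -natrB ?(ltnW lt_ba) // unitZpE // coprime_lt_pdiv ?subn_gt0 //.
exact: leq_ltn_trans (leq_subr b a) a_lt.
Qed.

Section RDHCounting.

Variables n k : nat.
Hypothesis n_gt1 : (1 < n)%N.
Local Notation vec := (vec n k).

Lemma card_Zn : #|{: 'Z_n}| = n.
Proof. by rewrite card_ord Zp_cast. Qed.

Lemma card_vec : #|{: vec}| = (n ^ k)%N.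
Proof. by rewrite card_ffun card_Zn card_ord. Qed.

Lemma Ups_add (y a b : vec) : Ups y (a + b) = Ups y a + Ups y b.
Proof. by rewrite /Ups -big_split; apply: eq_bigr => i _; rewrite ffunE mulrDl. Qed.

Definition Ups_fibre (y : vec) (s : 'Z_n) := [set m' : vec | Ups y m' == s].

Section Fibres.

Variables (y : vec) (i0 : 'I_k).
Hypothesis y_i0_unit : y i0 \is a GRing.unit.

(* Translating by a vector supported on [i0] maps one fibre into any other. *)
Lemma card_Ups_fibre_le s s' : (#|Ups_fibre y s| <= #|Ups_fibre y s'|)%N.
Proof.
pose d : vec := [ffun i => if i == i0 then (s' - s) / y i0 else 0].
have Ups_d : Ups y d = s' - s.
  rewrite /Ups (bigD1 i0) //= big1 ?addr0; first by rewrite ffunE eqxx divrK.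
  by move=> i /negbTE ne_i; rewrite ffunE ne_i mul0r.
rewrite -(card_in_imset (f := fun m' : vec => m' + d)); last by move=> a b _ _; apply: addIr.
apply/subset_leq_card/subsetP => z /imsetP [a]; rewrite !inE => /eqP Ups_a ->.
by rewrite Ups_add Ups_a Ups_d addrC subrK.
Qed.

Lemma card_Ups_fibre s : #|Ups_fibre y s| = (n ^ k.-1)%N.
Proof.
have fibre_eq s' : #|Ups_fibre y s'| = #|Ups_fibre y s|.
  by apply/eqP; rewrite eqn_leq !card_Ups_fibre_le.
have : (\sum_(s' : 'Z_n) #|Ups_fibre y s'| = n ^ k)%N.
  rewrite -card_vec -sum1_card (partition_big (Ups y) predT) //=.
  by apply: eq_bigr => s' _; rewrite -sum1_card; apply: eq_bigl => m'; rewrite inE.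
have k_gt0 : (0 < k)%N by apply: leq_ltn_trans (ltn_ord i0).
under eq_bigr do rewrite fibre_eq.
rewrite sum_nat_const card_Zn -[X in (n ^ X)%N](prednK k_gt0) expnS.
by move/eqP; rewrite eqn_pmul2l ?(ltnW n_gt1) // => /eqP.
Qed.

End Fibres.

Definition unit_vecs := [set y : vec | unit_vec y].

Definition unit_keys (m : vec) (t : 'Z_n) := [set y in unit_vecs | Ups y m == t].

Definition scale_at (j : 'I_k) (a : 'Z_n) (y : vec) : vec :=
  [ffun i => if i == j then a * y i else y i].

Lemma scale_at_unit j (a : 'Z_n) (y : vec) :
  a \is a GRing.unit -> y \in unit_vecs -> scale_at j a y \in unit_vecs.
Proof.
move=> a_unit; rewrite !inE => /forallP y_unit; apply/forallP => i.
by rewrite ffunE; case: ifP; rewrite ?unitrM ?a_unit y_unit.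
Qed.

Lemma scale_at_inj j (a : 'Z_n) : a \is a GRing.unit -> injective (scale_at j a).
Proof.
move=> a_unit y z /ffunP eq_yz; apply/ffunP => i; have := eq_yz i.
by rewrite !ffunE; case: ifP => // _; apply: mulrI.
Qed.

Lemma scale_at_keys_eq (m : vec) t j (a b : 'Z_n) (y z : vec) :
  y \in unit_keys m t -> z \in unit_keys m t -> scale_at j a y = scale_at j b z ->
  a * (m j * y j) = b * (m j * y j).
Proof.
rewrite !inE => /andP [_ /eqP Ups_y] /andP [_ /eqP Ups_z] /ffunP eq_yz.
have eq_off i : i != j -> y i = z i.
  by move=> ne_ij; have := eq_yz i; rewrite !ffunE (negbTE ne_ij).
have eq_j : a * y j = b * z j by have := eq_yz j; rewrite !ffunE eqxx.
have eq_mj : m j * y j = m j * z j.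
  move: Ups_z; rewrite -Ups_y /Ups (bigD1 j) //= [in RHS](bigD1 j) //=.
  by under eq_bigr => i ne_ij do rewrite -(eq_off i ne_ij); move/addIr.
by rewrite mulrCA eq_j -mulrCA -eq_mj.
Qed.

Lemma card_unit_keys_le (m : vec) t (j : 'I_k) : m j != 0 ->
  (#|unit_keys m t| * (pdiv n).-1 <= #|unit_vecs|)%N.
Proof.
move=> mj_neq0.
have lt_p (a : 'I_(pdiv n).-1) : (a.+1 < pdiv n)%N.
  by have := ltn_ord a; rewrite -ltnS prednK ?pdiv_gt0.
have scalar_unit (a : 'I_(pdiv n).-1) : ((a.+1)%:R : 'Z_n) \is a GRing.unit.
  by have := Zp_natr_sub_unit n_gt1 (lt_p a) (pdiv_gt0 n) isT; rewrite subr0.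
pose f (ya : vec * 'I_(pdiv n).-1) := scale_at j (ya.2.+1)%:R ya.1.
rewrite -[X in (_ * X)%N]card_ord -cardsT -cardsX -(card_in_imset (f := f)).
  apply/subset_leq_card/subsetP => w /imsetP [[y a]] /setXP [+ _] ->.
  by rewrite inE => /andP [y_unit _]; apply: scale_at_unit.
move=> [y a] [z b] /setXP [y_key _] /setXP [z_key _] /= eq_f.
case: (eqVneq a b) => [eq_ab | neq_ab].
  by move: eq_f; rewrite eq_ab => /(scale_at_inj (scalar_unit b)) /= ->.
have diff_unit : ((a.+1)%:R - (b.+1)%:R : 'Z_n) \is a GRing.unit.
  by rewrite Zp_natr_sub_unit // eqSS.
have yj_unit : y j \is a GRing.unit.
  by move: y_key; rewrite !inE => /andP [/forallP y_unit _].
have /eqP := scale_at_keys_eq y_key z_key eq_f.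
rewrite -subr_eq0 -mulrBl (mulrI_eq0 _ (mulrI diff_unit)).
by rewrite (mulIr_eq0 _ (mulIr yj_unit)) (negbTE mj_neq0).
Qed.

Definition key_msg_pairs (t : 'Z_n) :=
  [set p : vec * vec | (p.1 \in unit_vecs) && (p.2 \in Ups_fibre p.1 t)].

Lemma card_key_msg_pairs t : (0 < k)%N ->
  #|key_msg_pairs t| = (#|unit_vecs| * n ^ k.-1)%N.
Proof.
move=> k_gt0; rewrite -sum1_card.
rewrite (eq_bigl (fun p : vec * vec => (p.1 \in unit_vecs) && (p.2 \in Ups_fibre p.1 t)));
  last by move=> p; rewrite inE.
rewrite -(pair_big_dep (mem unit_vecs) (fun y => mem (Ups_fibre y t)) (fun _ _ => 1%N)) /=.
rewrite -sum1_card big_distrl /=; apply: eq_bigr => y y_unit.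
have y0_unit : y (Ordinal k_gt0) \is a GRing.unit by move: y_unit; rewrite inE => /forallP.
by rewrite mul1n -(card_Ups_fibre y0_unit t) -sum1_card.
Qed.

Lemma card_joint_event_le (m c : vec) t : (#|joint_event m c t| <= #|unit_keys m t|)%N.
Proof.
rewrite -(card_in_imset (f := snd)).
  apply/subset_leq_card/subsetP => y /imsetP [[[m' x] y']].
  rewrite !inE /= => /andP [/andP [y_unit /eqP [_ Ups_m']] /eqP eq_m'] ->.
  by rewrite /= y_unit -eq_m' Ups_m' eqxx.
move=> [[m1 x1] y1] [[m2 x2] y2]; rewrite !inE /=.
move=> /andP [/andP [_ /eqP [enc1 _]] /eqP eq1].
move=> /andP [/andP [_ /eqP [enc2 _]] /eqP eq2] /= eq_y.
subst m1 m2 y2; congr (_, _, _); apply/ffunP => i; apply: (addrI (m i)).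
by have /ffunP/(_ i) := enc1; have /ffunP/(_ i) := enc2; rewrite !ffunE => -> ->.
Qed.

Lemma card_key_msg_pairs_le (c : vec) t : (#|key_msg_pairs t| <= #|enc_event c t|)%N.
Proof.
pose f (p : vec * vec) := (p.2, [ffun i => c i - p.2 i], p.1).
rewrite -(card_in_imset (f := f)); last by move=> [y1 m1] [y2 m2] _ _ [-> _ ->].
apply/subset_leq_card/subsetP => w /imsetP [[y m']].
rewrite !inE /= => /andP [y_unit /eqP Ups_m'] ->.
rewrite /= y_unit /Enc Ups_m'; apply/eqP; congr (_, _).
by apply/ffunP => i; rewrite !ffunE addrC subrK.
Qed.

End RDHCounting.

Lemma ler_nat_ratio (R : numFieldType) (a b d : nat) :
  (0 < b)%N -> (0 < d)%N -> (a * d <= b)%N -> a%:R / b%:R <= 1 / d%:R :> R.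
Proof.
move=> b_gt0 d_gt0 le_ad_b.
by rewrite ler_pdivrMr ?ltr0n // mulrC mul1r ler_pdivlMr ?ltr0n // -natrM ler_nat.
Qed.

Theorem mainTheorem6 (n k : nat) (Hn1 : (1 < n)%N) (Hodd : odd n) (Hk : (0 < k)%N)
  (m : vec n k) (Hm : m != [ffun => 0]) (c : vec n k) (t : 'Z_n)
  (Hpos : (0 < #|enc_event c t|)%N) :
  cond_prob m c t <= 1 / (((pdiv n)%:R - 1) * (n%:R) ^+ (k.-1)).
Proof.
have [j mj_neq0] : exists j, m j != 0.
  apply/existsP; apply: contraR Hm => /existsPn m0.
  by apply/eqP/ffunP => i; rewrite ffunE; apply/eqP/negbNE/m0.
have key : (#|joint_event m c t| * ((pdiv n).-1 * n ^ k.-1) <= #|enc_event c t|)%N.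
  rewrite mulnA; apply: leq_trans (card_key_msg_pairs_le c t).
  rewrite card_key_msg_pairs //; apply: leq_mul (leqnn _).
  apply: leq_trans (card_unit_keys_le Hn1 t mj_neq0).
  exact: leq_mul (card_joint_event_le m c t) (leqnn _).
have -> : ((pdiv n)%:R - 1 : rat) = ((pdiv n).-1)%:R.
  by rewrite -{1}(prednK (pdiv_gt0 n)) -natr1 addrK.
rewrite -natrX -natrM ler_nat_ratio // muln_gt0 expn_gt0 (ltnW Hn1) andbT.
by rewrite -ltnS prednK ?pdiv_gt0 // prime_gt1 ?pdiv_prime.
Qed.
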